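(* Let $M\subset\mathbb{R}^{2d}$ satisfy the standing assumptions below and let $T$ be its outer symplectic billiard map. For every integer $k\ge1$ there exists a constant $\rho=\rho(k,M)>0$ such that there are no $k$-periodic orbits of $T$ outside the ball of radius $\rho$ centered at the origin; that is, every point $z$ in the exterior of $M$ with $T^k(z)=z$ satisfies $|z|\le\rho$.
   Context: Equip $\mathbb{R}^{2d}$ with the standard inner product, Euclidean norm $|\cdot|$, complex structure $J$ and symplectic form $\omega(u,v)=\langle Ju,v\rangle$. Standing assumptions: $M\subset\mathbb{R}^{2d}$ is a smooth closed hypersurface bounding a strictly convex domain containing the origin in its interior, and $M$ is a level set of a smooth function with positive definite Hessian. For $q\in M$ the Reeb vector $R(q)$ is the unique vector with $\omega(v,R(q))=0$ for all $v\in T_qM$ and $\omega(q,R(q))=1$. For $x$ in the exterior of $M$ there is a unique $m_-(x)\in M$ with $m_-(x)-x=\lambda R(m_-(x))$ for some $\lambda>0$; the outer symplectic billiard map is $T(x)=2m_-(x)-x$. *)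

From HB Require Import structures.
From mathcomp Require Import all_boot all_order all_algebra.
From mathcomp Require Import all_classical all_reals all_analysis.
Set Implicit Arguments. Unset Strict Implicit. Unset Printing Implicit Defensive.
Import Order.TTheory GRing.Theory Num.Theory.
Import numFieldNormedType.Exports.
Local Open Scope classical_set_scope.
Local Open Scope ring_scope.

(* R^{2d} is represented as row vectors of length d + d; the first d
   coordinates are x, the last d are y (z = x + i y). *)
Notation vec R d := 'rV[R]_(d + d).

Section Sympl.
Variables (R : realType) (d : nat).

Definition inner (u v : vec R d) : R := (u *m v^T) 0 0.

Definition enorm (u : vec R d) : R := Num.sqrt (inner u u).

Definition Jc (u : vec R d) : vec R d := row_mx (- rsubmx u) (lsubmx u).

Definition omega (u v : vec R d) : R := inner (Jc u) v.

Fixpoint smooth_n (n : nat) (f : vec R d -> R) : Prop :=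
  match n with
  | 0 => continuous f
  | n'.+1 => (forall x, differentiable f x) /\
             (forall v : vec R d, smooth_n n' (fun x => 'D_v f x))
  end.
Definition smooth (f : vec R d -> R) : Prop := forall n, smooth_n n f.

Definition ebase (i : 'I_(d + d)) : vec R d := delta_mx 0 i.

Definition hessian (f : vec R d -> R) (x : vec R d) : 'M[R]_(d + d) :=
  \matrix_(i, j) 'D_(ebase i) (fun y => 'D_(ebase j) f y) x.

Definition posdef (A : 'M[R]_(d + d)) : Prop :=
  forall v : vec R d, v != 0 -> 0 < (v *m A *m v^T) 0 0.

(* M = F^{-1}(c); the bounded domain is {F < c}, the exterior is {F > c} *)
Definition levelset (F : vec R d -> R) (c : R) : set (vec R d) :=
  [set x | F x = c].
Definition exterior (F : vec R d -> R) (c : R) : set (vec R d) :=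
  [set x | c < F x].

(* tangent space T_qM of the regular level set M at q: kernel of dF_q *)
Definition tangent (F : vec R d -> R) (q : vec R d) : set (vec R d) :=
  [set v | 'D_v F q = 0].

Definition is_reeb (F : vec R d -> R) (q r : vec R d) : Prop :=
  (forall v, tangent F q v -> omega v r = 0) /\ omega q r = 1.

(* graph of the outer symplectic billiard map: for x in the exterior,
   m = m_-(x) in M with m - x = lambda R(m), lambda > 0, and T(x) = 2m - x *)
Definition billiard_step (F : vec R d -> R) (c : R) (x y : vec R d) : Prop :=
  exterior F c x /\
  exists (m r : vec R d) (lam : R),
    levelset F c m /\ is_reeb F m r /\ 0 < lam /\
    m - x = lam *: r /\ y = 2%:R *: m - x.

Definition billiard_iter (F : vec R d -> R) (c : R) (k : nat)
  (x y : vec R d) : Prop :=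
  exists z : nat -> vec R d,
    z 0%N = x /\ z k = y /\
    forall i, (i < k)%N -> billiard_step F c (z i) (z i.+1).

End Sympl.

From HB Require Import structures.
From mathcomp Require Import all_boot all_order all_algebra.
From mathcomp Require Import all_classical all_reals all_analysis.
From mathcomp Require Import ring lra.
Set Implicit Arguments. Unset Strict Implicit. Unset Printing Implicit Defensive.
Import Order.TTheory GRing.Theory Num.Theory.
Import numFieldNormedType.Exports.
Local Open Scope classical_set_scope.
Local Open Scope ring_scope.

(* Consecutive points z_i, z_(i+1) of an orbit are symmetric about their
   midpoint m_i, which lies on M, and by convexity the Reeb condition at m_i
   says that omega(z_i - m_i, w - m_i) <= 0 for every w on M.  If z = z_0 is
   large compared with M, the orbit stays close to z, -z, z, ..., and testing
   with the point w of M on the ray through (-1)^i J z shows that every term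
   (-1)^i omega(z, m_i) is positive.  But these terms sum to
   (omega(z, z_0) - (-1)^k omega(z, z_k))/2, which vanishes when z_0 = z_k = z. *)

Section InnerProduct.
Variables (R : realType) (d : nat).
Implicit Types (u v w : vec R d).

Lemma innerE u v : inner u v = \sum_j u 0 j * v 0 j.
Proof. by rewrite /inner !mxE; apply: eq_bigr => j _; rewrite mxE. Qed.

Lemma innerC u v : inner u v = inner v u.
Proof. by rewrite !innerE; apply: eq_bigr => j _; rewrite mulrC. Qed.

Lemma innerDl u v w : inner (u + v) w = inner u w + inner v w.
Proof. by rewrite !innerE -big_split; apply: eq_bigr => j _; rewrite mxE mulrDl. Qed.

Lemma innerZl (t : R) u v : inner (t *: u) v = t * inner u v.
Proof. by rewrite !innerE mulr_sumr; apply: eq_bigr => j _; rewrite mxE mulrA. Qed.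

Lemma innerNl u v : inner (- u) v = - inner u v.
Proof. by rewrite -scaleN1r innerZl mulN1r. Qed.

Lemma innerBl u v w : inner (u - v) w = inner u w - inner v w.
Proof. by rewrite innerDl innerNl. Qed.

Lemma innerDr u v w : inner w (u + v) = inner w u + inner w v.
Proof. by rewrite innerC innerDl !(innerC w). Qed.

Lemma innerZr (t : R) u v : inner v (t *: u) = t * inner v u.
Proof. by rewrite innerC innerZl innerC. Qed.

Lemma innerNr u v : inner v (- u) = - inner v u.
Proof. by rewrite innerC innerNl innerC. Qed.

Lemma innerBr u v w : inner w (u - v) = inner w u - inner w v.
Proof. by rewrite innerDr innerNr. Qed.

Lemma inner_ge0 u : 0 <= inner u u.
Proof. by rewrite innerE; apply: sumr_ge0 => j _; rewrite -expr2 sqr_ge0. Qed.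

Lemma normr_inner_le u v : `|inner u v| <= (inner u u + inner v v) / 2.
Proof.
have := inner_ge0 (u - v); have := inner_ge0 (u + v).
rewrite !(innerBl, innerBr, innerDl, innerDr) (innerC v u).
by move=> *; rewrite ler_norml; apply/andP; split; lra.
Qed.

Lemma JcD u v : Jc (u + v) = Jc u + Jc v.
Proof. by rewrite /Jc add_row_mx !linearD /= ?opprD. Qed.

Lemma JcZ (t : R) u : Jc (t *: u) = t *: Jc u.
Proof. by rewrite /Jc scale_row_mx !linearZ /= scalerN. Qed.

Lemma JcN u : Jc (- u) = - Jc u.
Proof. by rewrite -scaleN1r JcZ scaleN1r. Qed.

Lemma JcK u : Jc (Jc u) = - u.
Proof. by rewrite /Jc row_mxKl row_mxKr -{3}(hsubmxK u) opp_row_mx. Qed.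

Lemma inner_J u v : inner (Jc u) (Jc v) = inner u v.
Proof.
rewrite /inner /Jc -{3}(hsubmxK u) -{3}(hsubmxK v) !tr_row_mx !mul_row_col.
by rewrite !linearN /= mulNmx opprK addrC.
Qed.

Lemma omega_antisym u v : omega u v = - omega v u.
Proof. by rewrite /omega -{1}(inner_J (Jc u) v) JcK innerNl innerC. Qed.

Lemma omega_self u : omega u u = 0.
Proof. by have := omega_antisym u u; lra. Qed.

Lemma omega_J u : omega u (Jc u) = inner u u.
Proof. by rewrite /omega inner_J. Qed.

Lemma omegaDl u v w : omega (u + v) w = omega u w + omega v w.
Proof. by rewrite /omega JcD innerDl. Qed.

Lemma omegaZl (t : R) u v : omega (t *: u) v = t * omega u v.
Proof. by rewrite /omega JcZ innerZl. Qed.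

Lemma omegaNl u v : omega (- u) v = - omega u v.
Proof. by rewrite /omega JcN innerNl. Qed.

Lemma omegaBl u v w : omega (u - v) w = omega u w - omega v w.
Proof. by rewrite omegaDl omegaNl. Qed.

Lemma omegaDr u v w : omega w (u + v) = omega w u + omega w v.
Proof. by rewrite /omega innerDr. Qed.

Lemma omegaZr (t : R) u v : omega v (t *: u) = t * omega v u.
Proof. by rewrite /omega innerZr. Qed.

Lemma omegaBr u v w : omega w (u - v) = omega w u - omega w v.
Proof. by rewrite /omega innerBr. Qed.

Lemma normr_omega_le u v : `|omega u v| <= (inner u u + inner v v) / 2.
Proof. by rewrite /omega -(inner_J u u); apply: normr_inner_le. Qed.

(* [`|u|] is the sup norm of the matrix [u], not the Euclidean norm [enorm u]. *)
Lemma normr_entry_le u j : `|u 0 j| <= `|u|.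
Proof.
rewrite (_ : `|u| = mx_norm u) // mx_normrE.
exact: (le_bigmax _ (fun ij : 'I_1 * 'I_(d + d) => `|u ij.1 ij.2|) (0, j)).
Qed.

Lemma inner_le_normr u (a : R) : `|u| <= a -> inner u u <= (d + d)%:R * a ^+ 2.
Proof.
move=> ua; rewrite innerE.
apply: (@le_trans _ _ (\sum_(j < d + d) a ^+ 2)); last first.
  by rewrite sumr_const card_ord mulr_natl.
apply: ler_sum => j _; rewrite -expr2 -real_normK ?num_real //.
have a0 : 0 <= a by apply: le_trans ua.
by rewrite lerXn2r ?nnegrE // (le_trans (normr_entry_le u j)).
Qed.

Lemma normr_lt_of_inner u (e : R) : 0 < e -> inner u u < e ^+ 2 -> `|u| < e.
Proof.
move=> e0 ue; rewrite (_ : `|u| = mx_norm u) // mx_normrE.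
apply: bigmax_lt => // [[i j]] _ /=; rewrite (ord1 i).
have : u 0 j ^+ 2 <= inner u u.
  rewrite innerE (bigD1 j) //= -expr2 lerDl.
  by apply: sumr_ge0 => l _; rewrite -expr2 sqr_ge0.
rewrite -real_normK ?num_real // => uj; have := normr_ge0 (u 0 j); nra.
Qed.

End InnerProduct.

Section Midpoints.
Variables (R : realType) (d : nat).
Implicit Types (x y w : vec R d) (z : nat -> vec R d).

Definition midpoint x y : vec R d := 2^-1 *: (x + y).

Lemma midpoint_reflect x y : y = 2 *: midpoint x y - x.
Proof. by rewrite /midpoint scalerA mulfV ?pnatr_eq0 // scale1r addrC addKr. Qed.

Lemma alternating_deviation z (D : R) k :
  (forall i, (i < k)%N -> `|midpoint (z i) (z i.+1)| <= D) ->
  forall i, (i <= k)%N -> `|z i - (-1) ^+ i *: z 0| <= 2 * i%:R * D.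
Proof.
move=> Dmid; elim=> [_|i IH ik].
  by rewrite expr0 scale1r subrr normr0 mulr0 mul0r.
have -> : z i.+1 - (-1) ^+ i.+1 *: z 0 =
          2 *: midpoint (z i) (z i.+1) - (z i - (-1) ^+ i *: z 0).
  rewrite {1}(midpoint_reflect (z i) (z i.+1)) exprS mulN1r scaleNr.
  by rewrite opprD !opprK addrA.
apply: le_trans (ler_normB _ _) _.
rewrite normrZ ger0_norm // -natr1.
by have := IH (ltnW ik); have := Dmid i ik; nra.
Qed.

Lemma alternating_omega_midpoint_sum z w k :
  \sum_(i < k) (-1) ^+ i * omega w (midpoint (z i) (z i.+1)) =
  2^-1 * (omega w (z 0) - (-1) ^+ k * omega w (z k)).
Proof.
elim: k => [|k IH]; first by rewrite big_ord0 expr0 mul1r subrr mulr0.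
by rewrite big_ord_recr /= IH /midpoint omegaZr omegaDr exprS; ring.
Qed.

End Midpoints.

Section ConvexFunction.
Variables (R : realType) (d : nat) (F : vec R d -> R).
Hypothesis smoothF : smooth F.
Hypothesis hessianF : forall x, posdef (hessian F x).

Lemma F_differentiable x : differentiable F x.
Proof. by have [dF _] := smoothF 1%N; apply: dF. Qed.

Lemma derive_F_differentiable v x : differentiable (fun y => 'D_v F y) x.
Proof. by have [_ dF] := smoothF 2%N; have [ddF _] := dF v; apply: ddF. Qed.

Lemma F_continuous : continuous F.
Proof. exact: (smoothF 0%N). Qed.

Lemma derive_ebase_sum (G : vec R d -> R) x v : differentiable G x ->
  'D_v G x = \sum_i v 0 i * 'D_(ebase R i) G x.
Proof.
move=> dG; rewrite deriveE // {1}(row_sum_delta v) linear_sum.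
by apply: eq_bigr => i _; rewrite linearZ /= -deriveE.
Qed.

Lemma derive2_hessian v x :
  'D_v (fun y => 'D_v F y) x = (v *m hessian F x *m v^T) 0 0.
Proof.
have dFj u j : derivable (fun y => 'D_(ebase R j) F y) x u.
  by apply: diff_derivable; apply: derive_F_differentiable.
rewrite derive_ebase_sum; last exact: derive_F_differentiable.
have -> : (fun y => 'D_v F y) =
          \sum_(j < d + d) (fun y => v 0 j * 'D_(ebase R j) F y).
  by rewrite fct_sumE; apply/funext => y; apply/derive_ebase_sum/F_differentiable.
rewrite !mxE; under [RHS]eq_bigr => i _ do rewrite !mxE mulr_suml.
rewrite exchange_big /=; apply: eq_bigr => i _.
rewrite derive_sum => [|j]; last exact: (derivableZ (dFj _ j)).
rewrite mulr_sumr; apply: eq_bigr => j _; rewrite !mxE (deriveZ _ (dFj _ j)).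
by rewrite [_ *: _]mulrC; ring.
Qed.

Lemma derive2_ge0 v x : 0 <= 'D_v (fun y => 'D_v F y) x.
Proof.
rewrite derive2_hessian; have [->|v0] := eqVneq v 0; last exact/ltW/hessianF.
by rewrite !mul0mx mxE.
Qed.

Lemma line_difference_quotientE (G : vec R d -> R) p u t :
  (fun h : R => h^-1 *: (((fun s : R => G (s *: u + p)) \o shift t) (h *: 1)
     - G (t *: u + p))) =
  (fun h => h^-1 *: ((G \o shift (t *: u + p)) (h *: u) - G (t *: u + p))).
Proof.
apply/funext => h /=; congr (_ *: (G _ - _)).
by rewrite /shift /= [h *: 1]mulr1 scalerDl addrA.
Qed.

Lemma line_derivable (G : vec R d -> R) p u t :
  derivable G (t *: u + p) u -> derivable (fun s : R => G (s *: u + p)) t 1.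
Proof. by rewrite /derivable line_difference_quotientE. Qed.

Lemma line_derive (G : vec R d -> R) p u t :
  'D_1 (fun s : R => G (s *: u + p)) t = 'D_u G (t *: u + p).
Proof. by rewrite /derive line_difference_quotientE. Qed.

Lemma line_slope_nondecreasing p u :
  {in `[0, 1] &, {homo (fun s : R => 'D_u F (s *: u + p)) : s t / s <= t}}.
Proof.
have dslope s : derivable (fun s : R => 'D_u F (s *: u + p)) s 1.
  exact/(line_derivable (G := fun y => 'D_u F y))/diff_derivable/derive_F_differentiable.
move=> s t; rewrite !in_itv /= => /andP[s0 _] /andP[_ t1] st.
apply: (@ger0_derive1_ndecr _ (fun s : R => 'D_u F (s *: u + p)) 0 1 _ _ _ s t s0 st t1).
- by move=> s' _; apply: dslope.
- by move=> s' _; rewrite derive1E (line_derive (fun y => 'D_u F y)) derive2_ge0.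
- by apply: derivable_within_continuous => s' _; apply: dslope.
Qed.

Lemma convex_first_order p q : F p + 'D_(q - p) F p <= F q.
Proof.
set u := q - p; pose g s := F (s *: u + p).
have dg s : derivable g s 1.
  exact/line_derivable/diff_derivable/F_differentiable.
have [s s01 gE] : exists2 s, s \in `]0, 1[ & g 1 - g 0 = 'D_u F (s *: u + p) * (1 - 0).
  apply: MVT => [|s _|]; first exact: ltr01.
    by rewrite -line_derive; apply/derivableP/dg.
  by apply: derivable_within_continuous => s _; apply: dg.
move: s01; rewrite in_itv /= => /andP[/ltW s_ge0 /ltW s_le1].
have : 'D_u F (0 *: u + p) <= 'D_u F (s *: u + p).
  by apply: line_slope_nondecreasing; rewrite ?in_itv /= ?lexx ?ler01 ?s_ge0 ?s_le1.
move: gE; rewrite /g subr0 mulr1 scale1r scale0r add0r /u subrK; lra.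
Qed.

End ConvexFunction.

Lemma compact_levelset_bounded (R : realType) (d : nat) (F : vec R d -> R) c :
  compact (levelset F c) -> exists D : R, forall w, F w = c -> `|w| <= D.
Proof.
move=> /compact_bounded[M [_ MleD]]; exists (`|M| + 1) => w Fw.
by apply: (MleD (`|M| + 1)); rewrite // (le_lt_trans (ler_norm M)) ?ltrDl.
Qed.

Section OuterBilliard.
Variables (R : realType) (d : nat) (F : vec R d -> R) (c : R).
Hypothesis smoothF : smooth F.
Hypothesis hessianF : forall x, posdef (hessian F x).
Hypothesis F0_lt_c : F 0 < c.

Lemma levelset_away_from_origin :
  exists r : R, 0 < r /\ forall w, F w = c -> r ^+ 2 <= inner w w.
Proof.
have Fc_near0 := @cvgr_lt _ _ _ _ F (F 0) (F_continuous smoothF (x := 0)) c F0_lt_c.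
have [r /= r0 near0] := proj1 (@nbhs_norm0P _ _ (fun w => F w < c)) (Fc_near0 _).
exists r; split => // w Fw; rewrite leNgt; apply/negP => /(normr_lt_of_inner r0).
by move=> /near0; rewrite Fw ltxx.
Qed.

Lemma levelset_radial_derive_gt0 m : F m = c -> 0 < 'd F m m.
Proof.
move=> Fm; have := convex_first_order smoothF hessianF m 0.
rewrite sub0r deriveE ?linearN /= ?Fm; last exact: F_differentiable.
by have := F0_lt_c; lra.
Qed.

(* [omega(., r)] vanishes on the tangent space [ker dF_m], hence is a multiple
   of [dF_m], and the multiple is fixed by [omega(m, r) = 1]. *)
Lemma reeb_omega m r v : F m = c -> is_reeb F m r ->
  omega v r = 'd F m v / 'd F m m.
Proof.
move=> Fm [tangent_r omega_mr].
have dFmm := levelset_radial_derive_gt0 Fm.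
set t := 'd F m v / 'd F m m.
have : tangent F m (v - t *: m).
  rewrite /tangent /= deriveE; last exact: F_differentiable.
  by rewrite linearB linearZ /= /t [_ *: _]divfK ?subrr ?gt_eqF.
by move/tangent_r; rewrite omegaBl omegaZl omega_mr mulr1; lra.
Qed.

Lemma billiard_step_midpoint x y : billiard_step F c x y ->
  F (midpoint x y) = c /\
  forall w, F w = c -> omega (x - midpoint x y) (w - midpoint x y) <= 0.
Proof.
case=> _ [m [r [lam [Fm [reeb_r [lam0 [mx ->]]]]]]].
have -> : midpoint x (2%:R *: m - x) = m.
  by rewrite /midpoint addrC subrK scalerA mulVf ?scale1r.
split => // w Fw.
have dFmm := levelset_radial_derive_gt0 Fm.
have dFwm : 'd F m (w - m) <= 0.
  have := convex_first_order smoothF hessianF m w.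
  by rewrite deriveE ?Fw ?Fm; [lra | exact: F_differentiable].
rewrite -opprB mx omegaNl omegaZl omega_antisym (reeb_omega _ Fm reeb_r).
rewrite mulrN opprK mulrA; apply: mulr_le0_ge0; last by rewrite invr_ge0 ltW.
exact: mulr_ge0_le0 (ltW lam0) dFwm.
Qed.

Lemma segment_meets_levelset p q : F p <= c -> c <= F q ->
  exists2 t : R, t \in `[0, 1] & F (p + t *: (q - p)) = c.
Proof.
move=> Fp Fq; apply: IVT; first exact: ler01.
  apply: continuous_subspaceT => t.
  apply: (continuous_comp (f := fun t : R => p + t *: (q - p))); last exact: F_continuous.
  have -> : (fun t : R => p + t *: (q - p)) = (fun=> p) + (fun t : R => t *: (q - p)) by [].
  by apply: continuousD; [exact: cvg_cst | apply: continuousZr_tmp; exact: cvg_id].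
rewrite scale0r addr0 scale1r addrC subrK.
by apply/andP; split; [rewrite ge_min Fp | rewrite le_max Fq orbT].
Qed.

(* [a] has the length of [z] and is orthogonal to it, so the segment from the
   exterior point [z] to [a] avoids the region [inner w w <= B] containing [M]:
   hence [a] is exterior too, and the segment from [0] to [a] crosses [M]. *)
Lemma ray_meets_levelset (B : R) z a : (forall w, F w = c -> inner w w <= B) ->
  c < F z -> inner a a = inner z z -> inner z a = 0 -> 2 * B < inner z z ->
  exists2 s : R, 0 < s & F (s *: a) = c.
Proof.
move=> MleB Fz aa za zB.
have Fa : c < F a.
  rewrite ltNge; apply/negP => Fa.
  have [t _ /MleB] := segment_meets_levelset Fa (ltW Fz).
  rewrite !(innerDl, innerDr, innerZl, innerZr, innerBl, innerBr, innerNl, innerNr).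
  rewrite (innerC a z) za aa.
  by have := mulr_ge0 (inner_ge0 z) (sqr_ge0 (2 * t - 1)); nra.
have [t t01] := segment_meets_levelset (ltW F0_lt_c) (ltW Fa).
rewrite subr0 add0r => Fta; exists t => //.
move: t01; rewrite in_itv /= => /andP[t_ge0 _]; rewrite lt_neqAle t_ge0 andbT.
by apply: (contraTneq _ F0_lt_c) => t0; move: Fta; rewrite -t0 scale0r => ->; rewrite ltxx.
Qed.

Section FarFromLevelset.
Variables (D r : R).
Hypothesis r_gt0 : 0 < r.
Hypothesis levelset_le : forall w, F w = c -> `|w| <= D.
Hypothesis levelset_ge : forall w, F w = c -> r ^+ 2 <= inner w w.

Definition drift_error (k : nat) : R :=
  (d + d)%:R * (((2 * k%:R + 1) * D) ^+ 2 + (2 * D) ^+ 2).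

(* Beyond it, the ray through [(-1)^i J z] meets [M] (first term) at some
   [s *: (-1)^i J z] with [s * inner z z > drift_error k] (second term). *)
Definition escape_radius (k : nat) : R :=
  2 * ((d + d)%:R * D ^+ 2) + drift_error k ^+ 2 / r ^+ 2.

Lemma drift_error_ge0 k : 0 <= drift_error k.
Proof. by rewrite mulr_ge0 ?addr_ge0 ?sqr_ge0. Qed.

Lemma omega_drift_ge k i x z m w : (i <= k)%N -> F m = c -> F w = c ->
  `|x - (-1) ^+ i *: z| <= 2 * i%:R * D ->
  - drift_error k <= omega (x - (-1) ^+ i *: z - m) (w - m).
Proof.
move=> ik Fm Fw dev.
have D0 : 0 <= D := le_trans (normr_ge0 m) (levelset_le Fm).
have /inner_le_normr dev_x : `|x - (-1) ^+ i *: z - m| <= (2 * k%:R + 1) * D.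
  apply: le_trans (ler_normB _ _) _; have := levelset_le Fm.
  have : 2 * i%:R * D <= 2 * k%:R * D by rewrite ler_wpM2r // ler_wpM2l // ler_nat.
  by move: dev; lra.
have /inner_le_normr dev_w : `|w - m| <= 2 * D.
  by apply: le_trans (ler_normB _ _) _; have := levelset_le Fm; have := levelset_le Fw; lra.
have /ler_normlP[omega_ge _] := normr_omega_le (x - (-1) ^+ i *: z - m) (w - m).
by have := drift_error_ge0 k; rewrite /drift_error mulrDr; lra.
Qed.

(* For the test point [w = s *: (-1)^i J z] of [M], the main term of
   [omega(x - m, w - m)] is [s * inner z z - (-1)^i omega(z, m)]. *)
Lemma far_midpoint_omega_gt0 k i z x m :
  (i <= k)%N -> escape_radius k < inner z z -> c < F z -> F m = c ->
  `|x - (-1) ^+ i *: z| <= 2 * i%:R * D ->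
  (forall w, F w = c -> omega (x - m) (w - m) <= 0) ->
  0 < (-1) ^+ i * omega z m.
Proof.
move=> ik far Fz Fm dev supp.
set N := inner z z; set sg : R := (-1) ^+ i.
have sg2 : sg * sg = 1 by rewrite -exprD addnn -mul2n exprM sqrrN !expr1n.
have MleB w : F w = c -> inner w w <= (d + d)%:R * D ^+ 2.
  by move/levelset_le; apply: inner_le_normr.
have NB : 2 * ((d + d)%:R * D ^+ 2) < N.
  by apply: le_lt_trans far; rewrite /escape_radius lerDl divr_ge0 ?sqr_ge0.
have NE : drift_error k ^+ 2 < N * r ^+ 2.
  rewrite -ltr_pdivrMr ?exprn_gt0 //; apply: le_lt_trans far.
  by rewrite /escape_radius lerDr mulr_ge0 // mulr_ge0 ?sqr_ge0.
pose a := sg *: Jc z.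
have aa : inner a a = N by rewrite innerZl innerZr inner_J mulrA sg2 mul1r.
have za : inner z a = 0 by rewrite innerZr innerC -/(omega z z) omega_self mulr0.
have [s s0 Fsa] := ray_meets_levelset MleB Fz aa za NB.
have sN : drift_error k < s * N.
  have rsN := levelset_ge Fsa; rewrite innerZl innerZr aa mulrA -expr2 in rsN.
  rewrite ltNge; apply/negP => sNE.
  have sN0 : 0 <= s * N by rewrite mulr_ge0 ?inner_ge0 ?ltW.
  have : (s * N) ^+ 2 <= drift_error k ^+ 2.
    by rewrite lerXn2r ?nnegrE ?drift_error_ge0.
  by have := inner_ge0 z; nra.
have := omega_drift_ge ik Fm Fsa dev.
have := supp _ Fsa.
have -> : x - m = sg *: z + (x - sg *: z - m) by rewrite addrA addrCA subrr addr0.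
rewrite omegaDl omegaZl omegaBr omegaZr /a omegaZr omega_J -/N mulrBr.
have -> : sg * (s * (sg * N)) = s * N * (sg * sg) by ring.
by rewrite sg2 mulr1; lra.
Qed.

Lemma periodic_orbit_in_escape_radius k z : (0 < k)%N -> c < F z ->
  billiard_iter F c k z z -> inner z z <= escape_radius k.
Proof.
move=> k_gt0 Fz [zs [z0 [zk steps]]]; rewrite leNgt; apply/negP => far.
have midpoint_on_M j : (j < k)%N -> F (midpoint (zs j) (zs j.+1)) = c.
  by move=> jk; have [] := billiard_step_midpoint (steps j jk).
have omega_gt0 (i : 'I_k) : 0 < (-1) ^+ i * omega z (midpoint (zs i) (zs i.+1)).
  have [Fm supp] := billiard_step_midpoint (steps i (ltn_ord i)).
  apply: far_midpoint_omega_gt0 (ltnW (ltn_ord i)) far Fz Fm _ supp.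
  rewrite -z0; apply: alternating_deviation (ltnW (ltn_ord i)) => j jk.
  exact/levelset_le/midpoint_on_M.
have := alternating_omega_midpoint_sum zs z k.
rewrite z0 zk omega_self mulr0 subrr mulr0 => /psumr_eq0P sum0.
have := omega_gt0 (Ordinal k_gt0); rewrite sum0 ?ltxx // => i _.
exact/ltW/omega_gt0.
Qed.

End FarFromLevelset.

End OuterBilliard.

Theorem theorem3p8 (R : realType) (d : nat) (F : 'rV[R]_(d + d) -> R) (c : R) :
  smooth F ->
  (forall x, posdef (hessian F x)) ->
  F 0 < c ->
  compact (levelset F c) ->
  forall k : nat, (1 <= k)%N ->
  exists rho : R, 0 < rho /\
    forall z : 'rV[R]_(d + d),
      exterior F c z -> billiard_iter F c k z z -> enorm z <= rho.
Proof.
move=> smoothF hessianF F0_lt_c compactM k k_gt0.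
have [D levelset_le] := compact_levelset_bounded compactM.
have [r [r_gt0 levelset_ge]] := levelset_away_from_origin smoothF F0_lt_c.
exists (Num.sqrt (escape_radius d D r k) + 1).
split=> [|z Fz orbit]; first by rewrite ltr_wpDl ?sqrtr_ge0.
have := periodic_orbit_in_escape_radius smoothF hessianF F0_lt_c r_gt0 levelset_le
  levelset_ge k_gt0 Fz orbit.
by move/ler_wsqrtr/le_trans; apply; rewrite lerDl.
Qed.
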